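(* A set system $H=(U,(A_1,\dots,A_m))$ is harmonic if and only if $|H_{I_1,I_2}|=|H_{J_1,J_2}|$ for all pairs $(I_1,I_2)\sim(J_1,J_2)$.
   Context: For $I_1,I_2\subseteq[m]$, $H_{I_1,I_2}=\bigcap_{i\in I_1}A_i\cap\bigcap_{i\in I_2}(U\setminus A_i)$ (an empty intersection is $U$), and $H_I=H_{I,\emptyset}$. The run decomposition of a finite set $I$ of positive integers is the partition formed by the sizes, in nonincreasing order, of the maximal runs of consecutive integers in $I$. $H$ is harmonic if $|H_I|=|H_J|$ whenever $I,J\subseteq[m]$ have the same run decomposition. Pairs $(I_1,I_2)$, $(J_1,J_2)$ of subsets of $[m]$ with $I_1\cap I_2=J_1\cap J_2=\emptyset$ are equivalent, written $(I_1,I_2)\sim(J_1,J_2)$, if there is a bijection $\sigma:[m]\to[m]$ with $\sigma(I_1)=J_1$, $\sigma(I_2)=J_2$, and for all $i,j\in I_1\cup I_2$, $|\sigma(i)-\sigma(j)|=1$ iff $|i-j|=1$. *)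

(* The index set [m] = {1,...,m} is represented by 'I_m = {0,...,m-1};
   the shift by one preserves consecutiveness, so all notions are unchanged. *)
From mathcomp Require Import all_boot all_fingroup.
Set Implicit Arguments. Unset Strict Implicit. Unset Printing Implicit Defensive.

Definition Hsub (T : finType) (m : nat) (U : {set T}) (A : 'I_m -> {set T})
    (I1 I2 : {set 'I_m}) : {set T} :=
  U :&: (\bigcap_(i in I1) A i) :&: (\bigcap_(i in I2) (U :\: A i)).

Definition Hset (T : finType) (m : nat) (U : {set T}) (A : 'I_m -> {set T})
    (I : {set 'I_m}) : {set T} := Hsub U A I set0.

Definition inI (m : nat) (I : {set 'I_m}) (n : nat) : bool :=
  [exists k : 'I_m, (k \in I) && (val k == n)].

Definition run_start (m : nat) (I : {set 'I_m}) (i : 'I_m) : bool :=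
  (i \in I) && ((val i == 0) || ~~ inI I (val i).-1).

Definition run_len (m : nat) (I : {set 'I_m}) (i : 'I_m) : nat :=
  #|[set j : 'I_m | (i <= j) && [forall k : 'I_m, ((i <= k) && (k <= j)) ==> (k \in I)]]|.

Definition run_decomp (m : nat) (I : {set 'I_m}) : seq nat :=
  sort geq [seq run_len I i | i <- enum I & run_start I i].

Definition harmonic (T : finType) (m : nat) (U : {set T}) (A : 'I_m -> {set T}) : Prop :=
  forall I J : {set 'I_m}, run_decomp I = run_decomp J -> #|Hset U A I| = #|Hset U A J|.

Definition adjacent (i j : nat) : bool := (i.+1 == j) || (j.+1 == i).

Definition pair_equiv (m : nat) (I1 I2 J1 J2 : {set 'I_m}) : Prop :=
  [disjoint I1 & I2] /\ [disjoint J1 & J2] /\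
  exists s : {perm 'I_m},
    [/\ s @: I1 = J1, s @: I2 = J2 &
        forall i j, i \in I1 :|: I2 -> j \in I1 :|: I2 ->
          adjacent (val (s i)) (val (s j)) = adjacent (val i) (val j)].

From mathcomp Require Import all_boot all_fingroup.
From mathcomp Require Import zify.
Set Implicit Arguments. Unset Strict Implicit. Unset Printing Implicit Defensive.

(* Maximal runs of I are the classes of the relation [linked I x y]: every integer between x
   and y lies in I.  A permutation preserving adjacency on I maps each run of I onto a run of
   s(I) of the same length, so I and s(I) have the same run decomposition.  The forward
   direction then follows by induction on |I2| from
     |H_{I1, I2 \ j}| = |H_{I1 + j, I2 \ j}| + |H_{I1, I2}|,
   the case I2 = {} being harmonicity.  Conversely, if I and J have the same run
   decomposition, pairing the runs of I with runs of J of equal length and translating each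
   run onto its partner gives an adjacency-preserving bijection I -> J; extended to a
   permutation of 'I_m it witnesses (I, {}) ~ (J, {}). *)

(* [simpl] first identifies [val i] with [nat_of_ord i], which [lia] sees as distinct atoms. *)
Ltac ord_lia := simpl in *; lia.

Lemma card_ord_interval m a b : b <= m -> #|[set k : 'I_m | a <= k < b]| = b - a.
Proof.
elim: b => [|b IHb] le_bm.
  by rewrite sub0n; apply/eqP; rewrite cards_eq0; apply/eqP/setP => k; rewrite !inE ltn0 andbF.
have [le_ab | lt_ba] := leqP a b.
- have -> : [set k : 'I_m | a <= k < b.+1] = Ordinal le_bm |: [set k : 'I_m | a <= k < b].
    by apply/setP => k; rewrite !inE -val_eqE /=; lia.
  rewrite cardsU1 IHb ?inE /=; lia.
- have -> : [set k : 'I_m | a <= k < b.+1] = set0 by apply/setP => k; rewrite !inE; lia.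
  rewrite cards0; lia.
Qed.

Section Runs.
Variables (m : nat) (X : {set 'I_m}).

Definition linked (x y : 'I_m) : bool :=
  [forall k : 'I_m, (minn x y <= k <= maxn x y) ==> (k \in X)].

Lemma linkedP (x y : 'I_m) :
  reflect (forall k : 'I_m, minn x y <= k -> k <= maxn x y -> k \in X) (linked x y).
Proof.
apply: (iffP forallP) => [H k h1 h2 | H k]; first by apply: (implyP (H k)); rewrite h1 h2.
by apply/implyP => /andP[]; apply: H.
Qed.

Lemma linked_meml (x y : 'I_m) : linked x y -> x \in X.
Proof. by move/linkedP; apply; ord_lia. Qed.

Lemma linked_memr (x y : 'I_m) : linked x y -> y \in X.
Proof. by move/linkedP; apply; ord_lia. Qed.

Lemma linked_refl (x : 'I_m) : x \in X -> linked x x.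
Proof.
move=> xX; apply/linkedP => k h1 h2.
by have -> : k = x by apply/val_inj; ord_lia.
Qed.

Lemma linked_sym (x y : 'I_m) : linked x y -> linked y x.
Proof. by move/linkedP => H; apply/linkedP => k h1 h2; apply: H; ord_lia. Qed.

Lemma linked_trans (x y z : 'I_m) : linked x y -> linked y z -> linked x z.
Proof.
move=> /linkedP Hxy /linkedP Hyz; apply/linkedP => k h1 h2.
have [] : minn x y <= k <= maxn x y \/ minn y z <= k <= maxn y z by ord_lia.
  by move=> /andP[]; apply: Hxy.
by move=> /andP[]; apply: Hyz.
Qed.

Lemma linked_sub (x y a b : 'I_m) : linked x y ->
  minn x y <= a <= maxn x y -> minn x y <= b <= maxn x y -> linked a b.
Proof. by move/linkedP => H ha hb; apply/linkedP => k h1 h2; apply: H; ord_lia. Qed.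

Lemma linked_adj (x y : 'I_m) : x \in X -> y \in X -> adjacent x y -> linked x y.
Proof.
rewrite /adjacent => xX yX xy; apply/linkedP => k h1 h2.
have [] : val k = val x \/ val k = val y by ord_lia.
  by move/val_inj ->.
by move/val_inj ->.
Qed.

Lemma run_start_le (i y : 'I_m) : run_start X i -> linked i y -> i <= y.
Proof.
case/andP => _ start_i iy; rewrite leqNgt; apply/negP => lt_yi.
have lt_pred : (val i).-1 < m by have := ltn_ord i; ord_lia.
have predX : Ordinal lt_pred \in X by move/linkedP: iy; apply => /=; ord_lia.
move: start_i; rewrite (_ : (val i == 0) = false) /=; last by ord_lia.
by case/negP; apply/existsP; exists (Ordinal lt_pred); rewrite predX /=.
Qed.

Lemma linked_run_starts (i j : 'I_m) : run_start X i -> run_start X j -> linked i j -> i = j.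
Proof.
move=> si sj ij; apply/val_inj/eqP.
by rewrite eqn_leq (run_start_le si ij) (run_start_le sj (linked_sym ij)).
Qed.

Definition run_size (x : 'I_m) : nat := #|[set y | linked x y]|.

Definition run_head (x : 'I_m) : 'I_m := [arg min_(j < x | linked j x) val j].

Definition run_starts (L : nat) : {set 'I_m} := [set i | run_start X i && (run_size i == L)].

Lemma linked_run_size (x y : 'I_m) : linked x y -> run_size x = run_size y.
Proof.
move=> xy; apply: eq_card => z; rewrite !inE.
by apply/idP/idP => [xz | yz]; [exact: linked_trans (linked_sym xy) xz | exact: linked_trans xy yz].
Qed.

Lemma run_headP (x : 'I_m) : x \in X -> linked (run_head x) x /\ run_start X (run_head x).
Proof.
move=> xX; rewrite /run_head; case: arg_minnP; first exact: linked_refl.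
move=> j jx min_j; split=> //; rewrite /run_start (linked_meml jx) /=.
case: eqP => //= j_neq0; apply/negP => /existsP[k /andP[kX /eqP val_k]].
have kj : linked k j by apply: linked_adj kX (linked_meml jx) _; rewrite /adjacent; ord_lia.
by have := min_j k (linked_trans kj jx); ord_lia.
Qed.

Lemma run_head_eq (i x : 'I_m) : run_start X i -> linked i x -> run_head x = i.
Proof.
move=> si ix; have [hx sh] := run_headP (linked_memr ix).
by apply: linked_run_starts sh si _; apply: linked_trans hx (linked_sym ix).
Qed.

Lemma run_head_linked (x y : 'I_m) : x \in X -> y \in X -> (run_head x == run_head y) = linked x y.
Proof.
move=> xX yX; have [hx sx] := run_headP xX; have [hy sy] := run_headP yX.
apply/eqP/idP => [eq_h | xy]; last first.
  by apply: esym; apply: run_head_eq sx _; apply: linked_trans hx xy.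
by apply: linked_trans (linked_sym hx) _; rewrite eq_h.
Qed.

Lemma linked_run_head (x y : 'I_m) : linked x y -> run_head x = run_head y.
Proof. by move=> xy; apply/eqP; rewrite run_head_linked ?(linked_meml xy) ?(linked_memr xy). Qed.

Lemma run_head_le (x : 'I_m) : x \in X -> run_head x <= x.
Proof. by move=> xX; have [hx sh] := run_headP xX; apply: run_start_le sh hx. Qed.

Lemma run_starts_head (x : 'I_m) : x \in X -> run_head x \in run_starts (run_size x).
Proof.
move=> xX; have [hx sh] := run_headP xX.
by rewrite inE sh (linked_run_size hx) eqxx.
Qed.

Lemma run_size_start (i : 'I_m) : run_start X i -> run_size i = run_len X i.
Proof.
move=> si; apply: eq_card => y; rewrite !inE.
apply/idP/idP => [iy | /andP[le_iy /forallP iyX]].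
  rewrite (run_start_le si iy); apply/forallP => k; apply/implyP => /andP[h1 h2].
  by move/linkedP: iy; apply; ord_lia.
by apply/linkedP => k h1 h2; apply: (implyP (iyX k)); ord_lia.
Qed.

Lemma run_start_bound (i : 'I_m) : run_start X i -> i + run_size i <= m.
Proof.
move=> si; have : run_size i <= #|[set k : 'I_m | i <= k < m]|.
  apply/subset_leq_card/subsetP => k; rewrite !inE => ik.
  by rewrite (run_start_le si ik) ltn_ord.
rewrite card_ord_interval //; have := ltn_ord i; ord_lia.
Qed.

Lemma linked_startE (i y : 'I_m) : run_start X i -> linked i y = (i <= y < i + run_size i).
Proof.
move=> si; apply/idP/idP => [iy | /andP[le_iy lt_y]].
  have : #|[set k : 'I_m | i <= k < y.+1]| <= run_size i.
    apply/subset_leq_card/subsetP => k; rewrite !inE => /andP[h1 h2].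
    by apply: (linked_sub iy); ord_lia.
  by rewrite card_ord_interval // (run_start_le si iy); ord_lia.
apply: contraT => not_iy.
have : run_size i <= #|[set k : 'I_m | i <= k < y]|.
  apply/subset_leq_card/subsetP => k; rewrite !inE => ik.
  have le_ik := run_start_le si ik.
  rewrite le_ik ltnNge; apply: contra not_iy => le_yk.
  by apply: (linked_sub ik); ord_lia.
by rewrite card_ord_interval; [ord_lia | exact: ltnW].
Qed.

Lemma run_offset_lt (x : 'I_m) : x \in X -> x - run_head x < run_size x.
Proof.
move=> xX; have [hx sh] := run_headP xX.
by have := hx; rewrite linked_startE // (linked_run_size hx); ord_lia.
Qed.

Lemma run_size_gt0 (x : 'I_m) : x \in X -> 0 < run_size x.
Proof. by move=> xX; apply/card_gt0P; exists x; rewrite inE linked_refl. Qed.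

Lemma card_run_members L : #|[set x in X | run_size x == L]| = L * #|run_starts L|.
Proof.
rewrite -sum1_card (partition_big run_head (fun j => j \in run_starts L)); last first.
  by move=> x; rewrite inE => /andP[xX /eqP <-]; apply: run_starts_head.
rewrite mulnC -sum_nat_const; apply: eq_bigr => i; rewrite inE => /andP[si /eqP <-].
rewrite sum1dep_card [RHS]/run_size; apply: eq_card => x; rewrite !inE.
apply/idP/idP => [/andP[/andP[xX _] /eqP <-] | ix]; first exact: (run_headP xX).1.
by rewrite (linked_memr ix) (run_head_eq si ix) (linked_run_size ix) !eqxx.
Qed.

Lemma count_run_lengths L :
  count (pred1 L) [seq run_len X i | i <- enum X & run_start X i] = #|run_starts L|.
Proof.
rewrite count_map count_filter -size_filter.
rewrite -(card_uniqP (filter_uniq _ (enum_uniq _))); apply: eq_card => i.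
rewrite !inE mem_filter mem_enum /=.
case si: (run_start X i); rewrite ?andbF //= run_size_start // andbT.
by case/andP: si => ->; rewrite andbT.
Qed.

End Runs.

Lemma run_decompP m (I J : {set 'I_m}) :
  run_decomp I = run_decomp J <-> forall L, #|run_starts I L| = #|run_starts J L|.
Proof.
have geq_sortP s1 s2 : reflect (sort geq s1 = sort geq s2) (perm_eq s1 s2).
  by apply: perm_sortP => [x y | y x z | x y] /=; [exact: leq_total | lia | lia].
rewrite /run_decomp; split => [/geq_sortP/seq.permP count_eq L | count_eq].
  by rewrite -!count_run_lengths count_eq.
by apply/geq_sortP/allP => L _ /=; rewrite !count_run_lengths count_eq.
Qed.

Lemma linked_image m (X : {set 'I_m}) (f : 'I_m -> 'I_m) :
  {in X &, forall x y : 'I_m, adjacent x y -> adjacent (f x) (f y)} ->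
  forall x y, linked X x y -> linked (f @: X) (f x) (f y).
Proof.
move=> f_adj.
suff up n (x y : 'I_m) : y - x = n -> x <= y -> linked X x y -> linked (f @: X) (f x) (f y).
  move=> x y xy; have [le_xy | /ltnW le_yx] := leqP x y; first exact: up.
  exact/linked_sym/(up _ y x erefl le_yx)/linked_sym.
elim: n x y => [|n IHn] x y dist le_xy xy.
  have -> : y = x by apply/val_inj; ord_lia.
  exact/linked_refl/imset_f/(linked_meml xy).
have lt_x1 : x.+1 < m by have := ltn_ord y; ord_lia.
have x_x1 : linked X x (Ordinal lt_x1) by apply: (linked_sub xy); ord_lia.
have x1_y : linked X (Ordinal lt_x1) y by apply: (linked_sub xy); ord_lia.
apply: linked_trans (IHn _ y _ _ x1_y); last 2 first; [ord_lia | ord_lia |].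
have [xX x1X] := (linked_meml x_x1, linked_memr x_x1).
by apply: linked_adj; rewrite ?imset_f //; apply: f_adj; rewrite // /adjacent eqxx.
Qed.

Section AdjacencyPreservingPerm.
Variables (m : nat) (s : {perm 'I_m}) (X : {set 'I_m}).
Hypothesis s_adj : {in X &, forall i j : 'I_m, adjacent (s i) (s j) = adjacent i j}.

Lemma linked_perm (x y : 'I_m) : linked (s @: X) (s x) (s y) = linked X x y.
Proof.
apply/idP/idP; last by apply: linked_image => i j iX jX; rewrite s_adj.
have sXK : (s^-1)%g @: (s @: X) = X.
  by rewrite -imset_comp (eq_imset _ (permK s)) imset_id.
have sV_adj : {in s @: X &, forall i j : 'I_m, adjacent i j -> adjacent ((s^-1)%g i) ((s^-1)%g j)}.
  by move=> _ _ /imsetP[i iX ->] /imsetP[j jX ->]; rewrite !permK s_adj.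
by move/(linked_image sV_adj); rewrite sXK !permK.
Qed.

Lemma run_size_perm (x : 'I_m) : run_size (s @: X) (s x) = run_size X x.
Proof.
rewrite /run_size -(card_preimset _ (@perm_inj _ s)); apply: eq_card => y.
by rewrite !inE linked_perm.
Qed.

(* A run of length L has L elements, so L * #(runs of length L) is the number of elements
   whose run has length L, and that number is visibly invariant under s. *)
Lemma card_run_starts_perm L : #|run_starts (s @: X) L| = #|run_starts X L|.
Proof.
case: L => [|L].
  have no_empty_runs (Y : {set 'I_m}) : run_starts Y 0 = set0.
    apply/setP => i; rewrite !inE; apply/negP => /andP[/andP[iY _] /eqP size0].
    by move: (run_size_gt0 iY); rewrite size0.
  by rewrite !no_empty_runs.
apply/eqP; rewrite -(eqn_pmul2l (ltn0Sn L)) -!card_run_members.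
rewrite -(card_preimset _ (@perm_inj _ s)); apply/eqP/eq_card => x.
by rewrite !inE (mem_imset _ _ (@perm_inj _ s)) run_size_perm.
Qed.

Lemma run_decomp_perm : run_decomp (s @: X) = run_decomp X.
Proof. by apply/run_decompP => L; apply: card_run_starts_perm. Qed.

End AdjacencyPreservingPerm.

Section SetSystem.
Variables (T : finType) (m : nat) (U : {set T}) (A : 'I_m -> {set T}).

Lemma Hsub_U1l j I1 I2 : Hsub U A (j |: I1) I2 = Hsub U A I1 I2 :&: A j.
Proof.
rewrite /Hsub bigcap_setU big_set1; apply/setP => x; rewrite !inE.
by case: (x \in A j); rewrite ?andbF ?andbT.
Qed.

Lemma Hsub_U1r j I1 I2 : Hsub U A I1 (j |: I2) = Hsub U A I1 I2 :\: A j.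
Proof.
rewrite /Hsub bigcap_setU big_set1; apply/setP => x; rewrite !inE.
by case: (x \in U); case: (x \in A j); rewrite ?andbF ?andbT.
Qed.

Lemma card_Hsub_split j I1 I2 :
  #|Hsub U A I1 I2| = #|Hsub U A (j |: I1) I2| + #|Hsub U A I1 (j |: I2)|.
Proof. by rewrite Hsub_U1l Hsub_U1r cardsID. Qed.

Lemma harmonic_card_Hsub_perm (s : {perm 'I_m}) (K : {set 'I_m}) :
  harmonic U A -> {in K &, forall i j : 'I_m, adjacent (s i) (s j) = adjacent i j} ->
  forall I1 I2, I1 :|: I2 \subset K -> #|Hsub U A I1 I2| = #|Hsub U A (s @: I1) (s @: I2)|.
Proof.
move=> harmonicH s_adj I1 I2; move: {2}#|I2| (erefl #|I2|) => n.
elim: n I1 I2 => [|n IHn] I1 I2 card_I2 subK.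
  rewrite (cards0_eq card_I2) imset0; apply: harmonicH; rewrite run_decomp_perm //.
  by apply: sub_in2 s_adj => i iI1; apply: (subsetP subK); rewrite inE iI1.
have [j jI2] : exists j, j \in I2 by apply/card_gt0P; rewrite card_I2.
have card_I2' : #|I2 :\ j| = n by move: card_I2; rewrite (cardsD1 j) jI2 => -[].
have eqI2 : j |: (I2 :\ j) = I2 by rewrite setD1K.
have subK1 : I1 :|: (I2 :\ j) \subset K.
  by apply: subset_trans subK; rewrite setUS // subD1set.
have subK2 : (j |: I1) :|: (I2 :\ j) \subset K by rewrite -setUA setUCA eqI2.
have split1 := card_Hsub_split j I1 (I2 :\ j).
have split2 := card_Hsub_split (s j) (s @: I1) (s @: (I2 :\ j)).
have eqsI2 : s j |: s @: (I2 :\ j) = s @: I2 by rewrite -imsetU1 setD1K.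
rewrite eqI2 in split1; rewrite eqsI2 in split2.
have := IHn _ _ card_I2' subK1; have := IHn _ _ card_I2' subK2; rewrite imsetU1.
lia.
Qed.

End SetSystem.

Section SetBijection.
Variables (T : finType) (A B : {set T}).
Hypothesis card_AB : #|A| = #|B|.

Definition set_bij (x : T) : T := nth x (enum B) (index x (enum A)).

Lemma index_enum_lt x : x \in A -> index x (enum A) < size (enum B).
Proof. by move=> xA; rewrite -cardE -card_AB cardE index_mem mem_enum. Qed.

Lemma set_bij_in x : x \in A -> set_bij x \in B.
Proof. by move=> xA; rewrite -mem_enum mem_nth // index_enum_lt. Qed.

Lemma set_bij_inj : {in A &, injective set_bij}.
Proof.
move=> x y xA yA; rewrite /set_bij (set_nth_default x y (index_enum_lt yA)).
move/eqP; rewrite nth_uniq ?enum_uniq ?index_enum_lt // => /eqP eq_index.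
by rewrite -(nth_index x (_ : x \in enum A)) ?mem_enum // eq_index nth_index ?mem_enum.
Qed.

Lemma set_bij_im : set_bij @: A = B.
Proof.
apply/eqP; rewrite eqEcard (card_in_imset set_bij_inj) card_AB leqnn andbT.
by apply/subsetP => _ /imsetP[x xA ->]; apply: set_bij_in.
Qed.

End SetBijection.

Lemma perm_extend (T : finType) (f : T -> T) (I J : {set T}) :
  {in I &, injective f} -> f @: I = J -> exists s : {perm T}, {in I, s =1 f}.
Proof.
move=> f_inj fIJ.
have card_IJ : #|I| = #|J| by rewrite -fIJ card_in_imset.
have card_C : #|~: I| = #|~: J| by apply/eqP; rewrite -(eqn_add2l #|I|) cardsC card_IJ cardsC.
pose g x := if x \in I then f x else set_bij (~: I) (~: J) x.
have gJ x : (g x \in J) = (x \in I).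
  rewrite /g; case: ifP => xI; first by rewrite -fIJ imset_f.
  by apply/negbTE; rewrite -in_setC set_bij_in // inE xI.
have g_inj : injective g.
  move=> x y gxy; have xy_in : (x \in I) = (y \in I) by rewrite -!gJ gxy.
  move: gxy; rewrite /g -xy_in; case: ifP => xI gxy.
    by apply: f_inj; rewrite // -xy_in.
  by apply: (set_bij_inj card_C _ _ gxy); rewrite inE -?xy_in xI.
by exists (perm g_inj) => x xI; rewrite permE /g xI.
Qed.

Section RunTransport.
Variables (m : nat) (I J : {set 'I_m}).
Hypothesis same_runs : forall L, #|run_starts I L| = #|run_starts J L|.

Definition target_head (x : 'I_m) : 'I_m :=
  set_bij (run_starts I (run_size I x)) (run_starts J (run_size I x)) (run_head I x).

(* Translate x along with its run; the [insubd] default is only reached for x outside I. *)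
Definition run_transport (x : 'I_m) : 'I_m := insubd x (target_head x + (x - run_head I x)).

Lemma target_headP (x : 'I_m) : x \in I ->
  run_start J (target_head x) /\ run_size J (target_head x) = run_size I x.
Proof.
move=> xI; have := set_bij_in (same_runs _) (run_starts_head xI).
by rewrite inE => /andP[-> /eqP].
Qed.

Lemma same_target_head (x y : 'I_m) : linked I x y -> target_head x = target_head y.
Proof. by move=> xy; rewrite /target_head (linked_run_head xy) (linked_run_size xy). Qed.

Lemma run_transportE (x : 'I_m) : x \in I ->
  val (run_transport x) = target_head x + (x - run_head I x).
Proof.
move=> xI; have [start_t size_t] := target_headP xI.
have := run_start_bound start_t; have := run_offset_lt xI.
by rewrite /run_transport val_insubd size_t => ? ?; rewrite ifT //; ord_lia.
Qed.

Lemma linked_run_transport (x : 'I_m) : x \in I -> linked J (target_head x) (run_transport x).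
Proof.
move=> xI; have [start_t size_t] := target_headP xI.
rewrite linked_startE // run_transportE // size_t; have := run_offset_lt xI; ord_lia.
Qed.

Lemma run_transport_in (x : 'I_m) : x \in I -> run_transport x \in J.
Proof. by move/linked_run_transport/linked_memr. Qed.

Lemma linked_transport (x y : 'I_m) : x \in I -> y \in I ->
  linked J (run_transport x) (run_transport y) = linked I x y.
Proof.
move=> xI yI; have [tx ty] := (linked_run_transport xI, linked_run_transport yI).
apply/idP/idP => [rxy | xy]; last first.
  by apply: linked_trans (linked_sym tx) _; rewrite (same_target_head xy).
have eq_t : target_head x = target_head y.
  rewrite -(run_head_eq (target_headP xI).1 tx) -(run_head_eq (target_headP yI).1 ty).
  exact: linked_run_head.
have eq_size : run_size I x = run_size I y.
  by rewrite -(target_headP xI).2 -(target_headP yI).2 eq_t.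
rewrite -run_head_linked //; apply/eqP; move: eq_t; rewrite /target_head eq_size.
by apply: (set_bij_inj (same_runs _)); [rewrite -eq_size |]; apply: run_starts_head.
Qed.

Lemma run_transport_adjacent (x y : 'I_m) : x \in I -> y \in I ->
  adjacent (run_transport x) (run_transport y) = adjacent x y.
Proof.
move=> xI yI; have [xy | not_xy] := boolP (linked I x y).
  have := run_head_le xI; have := run_head_le yI.
  rewrite /adjacent !run_transportE // (same_target_head xy) (linked_run_head xy); ord_lia.
have not_adj : ~~ adjacent x y by apply: contra not_xy; apply: linked_adj.
have not_adj' : ~~ adjacent (run_transport x) (run_transport y).
  apply: contra not_xy => adj; rewrite -linked_transport //.
  by apply: linked_adj adj; apply: run_transport_in.
by rewrite (negbTE not_adj) (negbTE not_adj').
Qed.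

Lemma run_transport_inj : {in I &, injective run_transport}.
Proof.
move=> x y xI yI eq_r.
have xy : linked I x y by rewrite -linked_transport // eq_r linked_refl ?run_transport_in.
apply/val_inj; have := congr1 val eq_r; have := run_head_le xI; have := run_head_le yI.
rewrite !run_transportE // (same_target_head xy) (linked_run_head xy); ord_lia.
Qed.

Lemma run_transport_im : run_transport @: I = J.
Proof.
apply/setP => y; apply/imsetP/idP => [[x xI ->] | yJ]; first exact: run_transport_in.
set h := run_head J y; set L := run_size J y.
have offset_y : y - h < L := run_offset_lt yJ.
have le_hy : h <= y := run_head_le yJ.
have : h \in set_bij (run_starts I L) (run_starts J L) @: run_starts I L.
  by rewrite set_bij_im // run_starts_head.
case/imsetP => i; rewrite inE => /andP[start_i /eqP size_i] h_eq.
have lt_x : i + (y - h) < m by have := run_start_bound start_i; rewrite size_i; ord_lia.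
have ix : linked I i (Ordinal lt_x) by rewrite linked_startE //= size_i; ord_lia.
exists (Ordinal lt_x); first exact: linked_memr ix.
apply/val_inj; rewrite run_transportE ?(linked_memr ix) // /target_head.
by rewrite (run_head_eq start_i ix) -(linked_run_size ix) size_i -h_eq /=; ord_lia.
Qed.

End RunTransport.

Theorem lemma3p22 (T : finType) (m : nat) (U : {set T}) (A : 'I_m -> {set T})
    (hA : forall i, A i \subset U) :
  harmonic U A <->
  (forall I1 I2 J1 J2 : {set 'I_m}, pair_equiv I1 I2 J1 J2 ->
     #|Hsub U A I1 I2| = #|Hsub U A J1 J2|).
Proof.
split=> [harmonicH I1 I2 J1 J2 [_ [_ [s [<- <- s_adj]]]] | pair_inv I J /run_decompP same_runs].
  exact: harmonic_card_Hsub_perm harmonicH s_adj _ _ (subxx _).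
have [s s_transport] := perm_extend (run_transport_inj same_runs) (run_transport_im same_runs).
have disj0 (X : {set 'I_m}) : [disjoint X & set0] by rewrite disjoints_subset setC0 subsetT.
apply: (pair_inv I set0 J set0); split; [exact: disj0 | split; [exact: disj0 |]].
exists s; split; first by rewrite -(run_transport_im same_runs); apply: eq_in_imset.
  exact: imset0.
move=> i j; rewrite setU0 => iI jI; rewrite !s_transport //; exact: run_transport_adjacent.
Qed.
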